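(* There exist infinite diameter, infinite valence graphs $\mathcal G$ that are quasi-isometric to trees but whose Rips complex $R_d(\mathcal G)$ is not $CAT(0)$ for any $d$.
   Context: For a graph $\mathcal G$ and $d>0$, the Rips complex $R_d(\mathcal G)$ is the simplicial complex whose vertices are the vertices of $\mathcal G$ and whose simplices are the finite sets of vertices with pairwise distance $\le d$ in $\mathcal G$ (metrized as a piecewise Euclidean complex with regular simplices). *)

From Stdlib Require Import Reals List.
From Coquelicot Require Import Coquelicot.
Import ListNotations.
Open Scope R_scope.

Record graph := Graph {
  vert : Type;
  adj : vert -> vert -> Prop;
  adj_sym : forall u v, adj u v -> adj v u;
  adj_irrefl : forall v, ~ adj v v }.

Inductive walk (G : graph) : vert G -> vert G -> nat -> Prop :=
| walk_nil : forall v, walk G v v 0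
| walk_cons : forall u w v n, adj G u w -> walk G w v n -> walk G u v (S n).

Definition gdist (G : graph) (u v : vert G) (n : nat) : Prop :=
  walk G u v n /\ forall m, walk G u v m -> (n <= m)%nat.

Definition connected (G : graph) : Prop :=
  forall u v : vert G, exists n, walk G u v n.

Definition infinite_diameter (G : graph) : Prop :=
  forall n : nat, exists u v : vert G, forall m, walk G u v m -> (n <= m)%nat.

Definition infinite_valence (G : graph) : Prop :=
  exists v : vert G, ~ exists l : list (vert G), forall w, adj G v w -> In w l.

Fixpoint consec_adj (G : graph) (l : list (vert G)) : Prop :=
  match l with
  | x :: ((y :: _) as t) => adj G x y /\ consec_adj G t
  | _ => True
  end.

Definition is_cycle (G : graph) (l : list (vert G)) : Prop :=
  (3 <= length l)%nat /\ NoDup l /\ consec_adj G l /\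
  exists x y, head l = Some x /\ last l x = y /\ adj G y x.

Definition is_tree (T : graph) : Prop :=
  connected T /\ forall l, ~ is_cycle T l.

Definition quasi_isometric (G H : graph) : Prop :=
  exists (f : vert G -> vert H) (lam C : R), 1 <= lam /\ 0 <= C /\
    (forall x y n m, gdist G x y n -> gdist H (f x) (f y) m ->
        / lam * INR n - C <= INR m /\ INR m <= lam * INR n + C) /\
    (forall z : vert H, exists x n, gdist H (f x) z n /\ INR n <= C).

Definition qi_to_tree (G : graph) : Prop :=
  exists T : graph, is_tree T /\ quasi_isometric G T.

Definition within (G : graph) (d : R) (u v : vert G) : Prop :=
  exists n, walk G u v n /\ INR n <= d.

Definition rsimplex (G : graph) (d : R) (s : list (vert G)) : Prop :=
  forall u v, In u s -> In v s -> within G d u v.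

Definition lsum {A : Type} (F : A -> R) (s : list A) : R :=
  fold_right (fun a acc => F a + acc) 0 s.

(* points = barycentric coordinates, supported on a simplex *)
Definition rips_point_prop (G : graph) (d : R) (f : vert G -> R) : Prop :=
  (forall v, 0 <= f v) /\
  exists s, NoDup s /\ rsimplex G d s /\ (forall v, f v <> 0 -> In v s) /\
            lsum f s = 1.

Definition rips_point (G : graph) (d : R) : Type :=
  { f : vert G -> R | rips_point_prop G d f }.

Definition coord {G : graph} {d : R} (x : rips_point G d) : vert G -> R :=
  proj1_sig x.

(* x and y lie in a common simplex s, and r is their Euclidean distance there,
   each simplex being a regular Euclidean simplex with edge length 1
   (vertex v realized as e_v / sqrt 2) *)
Definition seg_len (G : graph) (d : R) (x y : rips_point G d) (r : R) : Prop :=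
  exists s, NoDup s /\ rsimplex G d s /\
    (forall v, coord x v <> 0 -> In v s) /\ (forall v, coord y v <> 0 -> In v s) /\
    r = sqrt (lsum (fun v => (coord x v - coord y v) ^ 2) s / 2).

Inductive chain (G : graph) (d : R) : rips_point G d -> rips_point G d -> R -> Prop :=
| chain_nil : forall x, chain G d x x 0
| chain_cons : forall x z y a b,
    seg_len G d x z a -> chain G d z y b -> chain G d x y (a + b).

Definition rips_dist (G : graph) (d : R) (x y : rips_point G d) : R :=
  real (Glb_Rbar (fun r => chain G d x y r)).

Definition geodesic {X : Type} (D : X -> X -> R) (x y : X) (g : R -> X) : Prop :=
  g 0 = x /\ g (D x y) = y /\
  forall s t, 0 <= s <= D x y -> 0 <= t <= D x y -> D (g s) (g t) = Rabs (s - t).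

Definition geodesic_space {X : Type} (D : X -> X -> R) : Prop :=
  forall x y, exists g, geodesic D x y g.

Definition euclid2 (p q : R * R) : R :=
  sqrt ((fst p - fst q) ^ 2 + (snd p - snd q) ^ 2).

Definition seg_pt (p q : R * R) (L t : R) : R * R :=
  (fst p + t / L * (fst q - fst p), snd p + t / L * (snd q - snd p)).

Definition cat0_ineq {X : Type} (D : X -> X -> R) : Prop :=
  forall (x y z : X) (g1 g2 g3 : R -> X) (a b c : R * R),
    geodesic D x y g1 -> geodesic D y z g2 -> geodesic D z x g3 ->
    euclid2 a b = D x y -> euclid2 b c = D y z -> euclid2 c a = D z x ->
    let sides := [(g1, D x y, a, b); (g2, D y z, b, c); (g3, D z x, c, a)] in
    forall gi Li Pi Qi gj Lj Pj Qj s t,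
      In (gi, Li, Pi, Qi) sides -> In (gj, Lj, Pj, Qj) sides ->
      0 <= s <= Li -> 0 <= t <= Lj ->
      D (gi s) (gj t) <= euclid2 (seg_pt Pi Qi Li s) (seg_pt Pj Qj Lj t).

Definition CAT0 {X : Type} (D : X -> X -> R) : Prop :=
  geodesic_space D /\ cat0_ineq D.

(* R_d(G) is CAT(0): it is connected (so its length metric is finite-valued)
   and, with that metric, it is a CAT(0) space *)
Definition rips_CAT0 (G : graph) (d : R) : Prop :=
  (forall x y : rips_point G d, exists r, chain G d x y r) /\
  CAT0 (rips_dist G d).

From Pilot Require Import Defs.
From Stdlib Require Import Reals List.
From Coquelicot Require Import Coquelicot.
From Stdlib Require Import ZArith Lia Lra ProofIrrelevance FunctionalExtensionality.
Import ListNotations.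

(* The graph [thick_ray] is the ray ℕ with every vertex replaced by countably many
   copies: (m, i) and (n, j) are adjacent iff |m - n| = 1.  Forgetting the copy index is a
   quasi-isometry onto the ray, and the vertex (0, 0) has infinitely many neighbours.
   In a CAT(0) space geodesics are unique, so the midpoint of the geodesic between the
   vertices (0, 0) and (k, 0), with k > d, is fixed by every automorphism of the graph fixing
   these two vertices, in particular by each swap of two other vertices on a common level.
   A point of R_d has finite support, so swapping with a vertex outside it shows that the
   midpoint is supported on {(0, 0), (k, 0)}; these span no simplex, so the midpoint would be
   an endpoint, which is absurd. *)

Local Open Scope nat_scope.

Lemma walk_app (G : graph) u v w n m :
  walk G u v n -> walk G v w m -> walk G u w (n + m).
Proof. induction 1; intros; simpl; [assumption | econstructor; eauto]. Qed.

Lemma walk_snoc (G : graph) u v w n : walk G u v n -> adj G v w -> walk G u w (S n).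
Proof.
  intros Huv Hvw. rewrite <- Nat.add_1_r.
  apply walk_app with v; [exact Huv | econstructor; [exact Hvw | constructor]].
Qed.

Lemma walk_rev (G : graph) u v n : walk G u v n -> walk G v u n.
Proof. induction 1; [constructor | eapply walk_snoc; eauto using adj_sym]. Qed.

Lemma walk_map (G H : graph) (f : vert G -> vert H) :
  (forall u v, adj G u v -> adj H (f u) (f v)) ->
  forall u v n, walk G u v n -> walk H (f u) (f v) n.
Proof. intros Hf u v n. induction 1; econstructor; eauto. Qed.

Definition ray_adj (a b : nat) : Prop := a = S b \/ b = S a.

Lemma ray_adj_sym a b : ray_adj a b -> ray_adj b a.
Proof. unfold ray_adj; tauto. Qed.

Lemma ray_adj_irrefl a : ~ ray_adj a a.
Proof. unfold ray_adj; lia. Qed.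

Definition ray : graph := Graph nat ray_adj ray_adj_sym ray_adj_irrefl.

Lemma ray_walk_length a b n : walk ray a b n -> (a <= b + n /\ b <= a + n)%nat.
Proof. induction 1 as [|u w v n Huw _ IH]; [lia | destruct Huw; lia]. Qed.

Lemma ray_walk_up a k : walk ray a (a + k) k.
Proof.
  induction k as [|k IH]; [rewrite Nat.add_0_r; constructor |].
  apply walk_snoc with (a + k)%nat; [exact IH | right; simpl; lia].
Qed.

Lemma ray_walk_dist a b : walk ray a b (a - b + (b - a)).
Proof.
  destruct (Nat.le_ge_cases a b) as [Hab | Hba].
  - replace (a - b + (b - a))%nat with (b - a)%nat by lia.
    pose proof (ray_walk_up a (b - a)) as W.
    rewrite Nat.add_sub_assoc, Nat.add_comm, Nat.add_sub in W by lia.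
    exact W.
  - replace (a - b + (b - a))%nat with (a - b)%nat by lia.
    apply walk_rev. pose proof (ray_walk_up b (a - b)) as W.
    rewrite Nat.add_sub_assoc, Nat.add_comm, Nat.add_sub in W by lia. exact W.
Qed.

Lemma ray_connected : connected ray.
Proof. intros a b. eexists. apply ray_walk_dist. Qed.

Lemma last_cons_default {A : Type} (z : A) t a b : last (z :: t) a = last (z :: t) b.
Proof. revert z; induction t as [|y t IH]; intro z; [reflexivity | exact (IH y)]. Qed.

(* A path without repetitions in the ray keeps going in the direction of its first step. *)
Lemma ray_path_monotone (t : list nat) (x y : nat) :
  NoDup (x :: y :: t) -> consec_adj ray (x :: y :: t) ->
  (y = S x -> last (y :: t) x = (x + S (length t))%nat) /\
  (x = S y -> x = (last (y :: t) x + S (length t))%nat).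
Proof.
  revert x y. induction t as [|z t IH]; intros x y Hnd [Hxy Hc]; [simpl; lia |].
  assert (Hxz : x <> z) by (intros <-; inversion Hnd as [|? ? Hx _]; apply Hx; simpl; auto).
  inversion Hnd as [|? ? _ Hnd']; subst.
  destruct (IH y z Hnd' Hc) as [Up Down].
  destruct Hc as [Hyz _].
  change (last (y :: z :: t) x) with (last (z :: t) x).
  rewrite (last_cons_default z t x y). simpl length.
  destruct Hyz; lia.
Qed.

Lemma ray_acyclic l : ~ is_cycle ray l.
Proof.
  intros [Hlen [Hnd [Hc [x0 [y0 [Hh [Hl Ha]]]]]]].
  destruct l as [|x [|y [|z t]]]; simpl in Hlen; try lia.
  injection Hh as <-. subst y0.
  destruct (ray_path_monotone (z :: t) x y Hnd Hc) as [Up Down].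
  change (last (x :: y :: z :: t) x) with (last (y :: z :: t) x) in Ha.
  simpl length in Up, Down.
  change (vert ray) with nat in *.
  destruct Hc as [Hxy _]. destruct Hxy, Ha; lia.
Qed.

Lemma ray_is_tree : is_tree ray.
Proof. split; [exact ray_connected | exact ray_acyclic]. Qed.
Definition thick_ray_adj (x y : nat * nat) : Prop := ray_adj (fst x) (fst y).

Lemma thick_ray_adj_sym x y : thick_ray_adj x y -> thick_ray_adj y x.
Proof. apply ray_adj_sym. Qed.

Lemma thick_ray_adj_irrefl x : ~ thick_ray_adj x x.
Proof. apply ray_adj_irrefl. Qed.

Definition thick_ray : graph :=
  Graph (nat * nat) thick_ray_adj thick_ray_adj_sym thick_ray_adj_irrefl.

Lemma thick_ray_walk_level x y n : walk thick_ray x y n -> walk ray (fst x) (fst y) n.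
Proof. apply (walk_map thick_ray ray fst). trivial. Qed.

Lemma thick_ray_walk_lift a b n :
  walk ray a b (S n) -> forall i j, walk thick_ray (a, i) (b, j) (S n).
Proof.
  intro W. remember (S n) as m eqn:Em. revert n Em.
  induction W as [|u w v m Huw W IH]; intros n Em i j; [discriminate|].
  injection Em as ->. destruct n as [|n].
  - inversion W; subst. apply walk_cons with (v, j); [exact Huw | constructor].
  - apply walk_cons with (w, 0); [exact Huw | exact (IH n eq_refl 0 j)].
Qed.

Lemma thick_ray_walk_short (x y : nat * nat) :
  exists n, walk thick_ray x y n /\
            (n <= fst x - fst y + (fst y - fst x) + 2)%nat.
Proof.
  destruct x as [a i], y as [b j]; simpl.
  destruct (Nat.eq_dec a b) as [<- | Hab].
  - exists 2. split; [| lia].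
    apply walk_cons with (S a, 0); [right; reflexivity|].
    apply walk_cons with (a, j); [left; reflexivity | constructor].
  - exists (a - b + (b - a)). split; [| lia].
    pose proof (ray_walk_dist a b) as W.
    destruct (a - b + (b - a)) as [|n] eqn:E; [lia|].
    exact (thick_ray_walk_lift a b n W i j).
Qed.

Lemma thick_ray_connected : connected thick_ray.
Proof. intros x y. destruct (thick_ray_walk_short x y) as [n [W _]]. eauto. Qed.

Lemma fresh_index (s : list (nat * nat)) n : exists j, ~ In (n, j) s.
Proof.
  assert (Hbound : exists j, forall x, In x s -> snd x < j).
  { induction s as [|a s [j Hj]]; [exists 0; simpl; tauto|].
    exists (S (Nat.max j (snd a))). intros x [<- | Hx]; [lia | specialize (Hj x Hx); lia]. }
  destruct Hbound as [j Hj]. exists j. intro H. specialize (Hj _ H). simpl in Hj. lia.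
Qed.

Lemma thick_ray_infinite_diameter : infinite_diameter thick_ray.
Proof.
  intros n. exists (0, 0), (n, 0). intros m W.
  apply thick_ray_walk_level, ray_walk_length in W. simpl in W. lia.
Qed.

Lemma thick_ray_infinite_valence : infinite_valence thick_ray.
Proof.
  exists (0, 0). intros [l Hl]. destruct (fresh_index l 1) as [j Hj].
  apply Hj, Hl. right. reflexivity.
Qed.

Lemma thick_ray_qi_ray : quasi_isometric thick_ray ray.
Proof.
  exists fst, 1%R, 2%R. split; [lra|]. split; [lra|]. split.
  - intros x y n m [Wn Hn] [Wm Hm].
    assert (Hmn : m <= n) by (apply Hm, thick_ray_walk_level, Wn).
    destruct (thick_ray_walk_short x y) as [n' [W' Hn']].
    specialize (Hn n' W'). pose proof (ray_walk_length _ _ _ Wm).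
    assert (Hnm : n <= m + 2) by lia.
    apply le_INR in Hmn. apply le_INR in Hnm. rewrite plus_INR in Hnm. simpl in Hnm.
    split; lra.
  - intro z. exists (z, 0), 0. split; [split; [constructor | intros; lia] | simpl; lra].
Qed.
Local Open Scope R_scope.

Section CAT0Geodesics.

Variables (X : Type) (D : X -> X -> R).
Hypothesis D_refl : forall x, D x x = 0.
Hypothesis D_nonneg : forall x y, 0 <= D x y.

Lemma geodesic_const x : geodesic D x x (fun _ => x).
Proof.
  split; [reflexivity | split; [reflexivity|]].
  intros s t Hs Ht. rewrite D_refl in *.
  replace s with 0 by lra. replace t with 0 by lra. rewrite Rminus_0_r, Rabs_R0. reflexivity.
Qed.

Lemma geodesic_dist_sym x y g : geodesic D x y g -> D y x = D x y.
Proof.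
  intros [Hg0 [HgL Hg]]. pose proof (D_nonneg x y).
  specialize (Hg (D x y) 0 ltac:(lra) ltac:(lra)).
  rewrite HgL, Hg0, Rminus_0_r, Rabs_right in Hg; lra.
Qed.

Lemma geodesic_space_dist_eq0 : geodesic_space D -> forall p q, D p q = 0 -> p = q.
Proof.
  intros Hgeo p q H. destruct (Hgeo p q) as [g [Hg0 [HgL _]]]. rewrite H in HgL. congruence.
Qed.

Lemma geodesic_midpoint_not_endpoint x y g :
  geodesic D x y g -> D x y <> 0 -> g (D x y / 2) <> x /\ g (D x y / 2) <> y.
Proof.
  intros [Hg0 [HgL Hg]] HL. pose proof (D_nonneg x y).
  split; intro E.
  - pose proof (Hg 0 (D x y / 2) ltac:(lra) ltac:(lra)) as Hd.
    rewrite Hg0, E, D_refl, Rabs_left in Hd; lra.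
  - pose proof (Hg (D x y / 2) (D x y) ltac:(lra) ltac:(lra)) as Hd.
    rewrite HgL, E, D_refl, Rabs_left in Hd; lra.
Qed.

(* Compare a geodesic [g] from x to y with [h] from y to x in the degenerate triangle x y y,
   whose comparison triangle is a segment: the CAT(0) inequality forces [g s = h (L - s)]. *)
Lemma cat0_geodesic_reverse x y g h : CAT0 D ->
  geodesic D x y g -> geodesic D y x h ->
  forall s, 0 <= s <= D x y -> g s = h (D x y - s).
Proof.
  intros [Hgeo Hcat] Hg Hh s Hs.
  set (L := D x y) in *.
  assert (HyxL : D y x = L) by exact (geodesic_dist_sym x y g Hg).
  assert (HL : 0 <= L) by apply D_nonneg.
  assert (Eline : forall a b, euclid2 (a, 0) (b, 0) = Rabs (a - b)).
  { intros a b. unfold euclid2; simpl. rewrite <- sqrt_Rsqr_abs. f_equal. unfold Rsqr. ring. }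
  assert (E1 : euclid2 (0, 0) (L, 0) = L).
  { rewrite Eline, Rabs_minus_sym, Rminus_0_r, Rabs_right; lra. }
  assert (E2 : euclid2 (L, 0) (L, 0) = D y y).
  { rewrite Eline, D_refl, Rminus_diag, Rabs_R0. reflexivity. }
  assert (E3 : euclid2 (L, 0) (0, 0) = D y x).
  { rewrite Eline, HyxL, Rminus_0_r, Rabs_right; lra. }
  pose proof (Hcat x y y g (fun _ => y) h (0, 0) (L, 0) (L, 0) Hg (geodesic_const y) Hh E1 E2 E3
    g L (0, 0) (L, 0) h L (L, 0) (0, 0) s (L - s)) as Hcmp.
  simpl in Hcmp. rewrite HyxL in Hcmp.
  assert (Hsame : seg_pt (0, 0) (L, 0) L s = seg_pt (L, 0) (0, 0) L (L - s)).
  { unfold seg_pt; simpl. destruct (Req_dec L 0) as [E | E].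
    - replace s with 0 by lra. rewrite E. f_equal; ring.
    - f_equal; field; exact E. }
  rewrite Hsame in Hcmp.
  apply geodesic_space_dist_eq0; [exact Hgeo|].
  apply Rle_antisym; [| apply D_nonneg].
  replace 0 with (euclid2 (seg_pt (L, 0) (0, 0) L (L - s)) (seg_pt (L, 0) (0, 0) L (L - s))).
  - apply Hcmp; [left; reflexivity | right; right; left; reflexivity | lra | lra].
  - unfold euclid2. rewrite <- sqrt_0. f_equal. ring.
Qed.

Lemma cat0_geodesic_unique x y g g' : CAT0 D ->
  geodesic D x y g -> geodesic D x y g' ->
  forall s, 0 <= s <= D x y -> g s = g' s.
Proof.
  intros Hcat Hg Hg' s Hs. destruct (proj1 Hcat y x) as [h Hh].
  rewrite (cat0_geodesic_reverse x y g h Hcat Hg Hh s Hs).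
  symmetry. exact (cat0_geodesic_reverse x y g' h Hcat Hg' Hh s Hs).
Qed.

Lemma cat0_isometry_fixes_geodesic x y g (f : X -> X) : CAT0 D ->
  (forall p q, D (f p) (f q) = D p q) -> f x = x -> f y = y ->
  geodesic D x y g -> forall s, 0 <= s <= D x y -> f (g s) = g s.
Proof.
  intros Hcat Hf Hfx Hfy Hg s Hs.
  apply (cat0_geodesic_unique x y (fun t => f (g t)) g Hcat); [| exact Hg | exact Hs].
  destruct Hg as [Hg0 [HgL Hg]].
  split; [rewrite Hg0; exact Hfx | split; [rewrite HgL; exact Hfy|]].
  intros t u Ht Hu. rewrite Hf. apply Hg; assumption.
Qed.

End CAT0Geodesics.
Lemma lsum_zero {A : Type} (f : A -> R) s : (forall v, In v s -> f v = 0) -> lsum f s = 0.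
Proof.
  induction s as [|a s IH]; intro Hf; [reflexivity|].
  change (f a + lsum f s = 0). rewrite Hf, IH; [ring | intros v Hv | left]; auto using in_cons.
Qed.

Section RipsComplex.

Variables (G : graph) (d : R).

Lemma rips_point_eq (x y : rips_point G d) : coord x = coord y -> x = y.
Proof.
  destruct x as [f Hf], y as [g Hg]. unfold coord; simpl. intros <-.
  f_equal. apply proof_irrelevance.
Qed.

Lemma chain_length_nonneg x y r : chain G d x y r -> 0 <= r.
Proof.
  induction 1 as [|x z y a b [s [_ [_ [_ [_ ->]]]]] _ IH]; [lra|].
  pose proof (sqrt_pos (lsum (fun v => (coord x v - coord z v) ^ 2) s / 2)). lra.
Qed.

Lemma rips_dist_nonneg x y : 0 <= rips_dist G d x y.
Proof.
  unfold rips_dist. destruct (Glb_Rbar_correct (fun r => chain G d x y r)) as [_ Hglb].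
  assert (H0 : Rbar_le 0 (Glb_Rbar (fun r => chain G d x y r))).
  { apply Hglb. intros r Hr. exact (chain_length_nonneg x y r Hr). }
  destruct (Glb_Rbar _); simpl in *; lra || contradiction.
Qed.

Lemma rips_dist_refl x : rips_dist G d x x = 0.
Proof.
  apply Rle_antisym; [| apply rips_dist_nonneg].
  unfold rips_dist. destruct (Glb_Rbar_correct (fun r => chain G d x x r)) as [Hlb _].
  specialize (Hlb 0 (chain_nil G d x)).
  pose proof (rips_dist_nonneg x x) as H. unfold rips_dist in H.
  destruct (Glb_Rbar _); simpl in *; lra || contradiction.
Qed.

Lemma within_refl a : 0 <= d -> Defs.within G d a a.
Proof. intro Hd. exists 0%nat. split; [constructor | simpl; exact Hd]. Qed.

Section VertexPoints.

Variable vert_eq_dec : forall u v : vert G, {u = v} + {u <> v}.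
Hypothesis d_nonneg : 0 <= d.

Definition vertex_coord (a : vert G) (v : vert G) : R := if vert_eq_dec v a then 1 else 0.

Lemma vertex_coord_rips_point a : rips_point_prop G d (vertex_coord a).
Proof.
  unfold vertex_coord. split; [intro v; destruct vert_eq_dec; lra|].
  exists [a]. split; [constructor; [simpl; tauto | constructor]|]. split; [|split].
  - intros u v [<- | []] [<- | []]. exact (within_refl a d_nonneg).
  - intros v Hv. destruct vert_eq_dec; [left; auto | lra].
  - unfold lsum; simpl. destruct vert_eq_dec; [lra | congruence].
Qed.

Definition vertex_point (a : vert G) : rips_point G d :=
  exist _ (vertex_coord a) (vertex_coord_rips_point a).

Lemma vertex_point_inj a b : vertex_point a = vertex_point b -> a = b.
Proof.
  intro E. apply (f_equal (fun x : rips_point G d => coord x a)) in E.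
  cbn in E. unfold vertex_coord in E.
  destruct (vert_eq_dec a b) as [Hab | _]; [exact Hab|].
  destruct (vert_eq_dec a a); [lra | congruence].
Qed.

Lemma lsum_supported_at (f : vert G -> R) a s :
  NoDup s -> (forall v, v <> a -> f v = 0) -> lsum f s = f a \/ lsum f s = 0.
Proof.
  induction s as [|b s IH]; intros Hnd Hf; [right; reflexivity|].
  change (lsum f (b :: s)) with (f b + lsum f s). inversion Hnd as [|? ? Hb Hnd']; subst.
  destruct (vert_eq_dec b a) as [-> | Hba].
  - left. rewrite lsum_zero; [ring|]. intros v Hv. apply Hf. intros ->. contradiction.
  - rewrite (Hf b Hba). destruct (IH Hnd' Hf) as [-> | ->]; [left | right]; ring.
Qed.

Lemma rips_point_supported_at (x : rips_point G d) a :
  (forall v, v <> a -> coord x v = 0) -> x = vertex_point a.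
Proof.
  intro Hx. destruct (proj2_sig x) as [_ [s [Hnd [_ [_ Hsum]]]]].
  change (lsum (coord x) s = 1) in Hsum.
  assert (Ha : coord x a = 1).
  { destruct (lsum_supported_at (coord x) a s Hnd Hx) as [E | E]; rewrite E in Hsum; lra. }
  apply rips_point_eq. extensionality v. cbn. unfold vertex_coord.
  destruct (vert_eq_dec v a) as [-> | Hva]; [exact Ha | exact (Hx v Hva)].
Qed.

Lemma rips_point_supported_far_pair (x : rips_point G d) a b :
  ~ Defs.within G d a b -> (forall v, v <> a -> v <> b -> coord x v = 0) ->
  x = vertex_point a \/ x = vertex_point b.
Proof.
  intros Hfar Hx.
  destruct (Req_dec (coord x b) 0) as [Hb | Hb].
  { left. apply rips_point_supported_at. intros v Hva.
    destruct (vert_eq_dec v b) as [-> | Hvb]; [exact Hb | exact (Hx v Hva Hvb)]. }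
  destruct (Req_dec (coord x a) 0) as [Ha | Ha].
  { right. apply rips_point_supported_at. intros v Hvb.
    destruct (vert_eq_dec v a) as [-> | Hva]; [exact Ha | exact (Hx v Hva Hvb)]. }
  exfalso. destruct (proj2_sig x) as [_ [s [_ [Hsimplex [Hsupp _]]]]].
  exact (Hfar (Hsimplex a b (Hsupp a Ha) (Hsupp b Hb))).
Qed.

End VertexPoints.

Section Automorphisms.

Variable pi : vert G -> vert G.
Hypothesis pi_adj : forall u v, adj G u v -> adj G (pi u) (pi v).
Hypothesis pi_invol : forall v, pi (pi v) = v.

Lemma rsimplex_map s : rsimplex G d s -> rsimplex G d (map pi s).
Proof.
  intros Hs u v Hu Hv.
  apply in_map_iff in Hu as [u' [<- Hu']]. apply in_map_iff in Hv as [v' [<- Hv']].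
  destruct (Hs u' v' Hu' Hv') as [n [W Hn]].
  exists n. split; [exact (walk_map G G pi pi_adj u' v' n W) | exact Hn].
Qed.

Lemma NoDup_map_invol s : NoDup s -> NoDup (map pi s).
Proof.
  apply NoDup_map_NoDup_ForallPairs.
  intros a b _ _ E. rewrite <- (pi_invol a), <- (pi_invol b), E. reflexivity.
Qed.

Lemma lsum_map_invol (f : vert G -> R) s : lsum (fun v => f (pi v)) (map pi s) = lsum f s.
Proof. induction s as [|a s IH]; [reflexivity|]. cbn. rewrite pi_invol. f_equal. exact IH. Qed.

Lemma support_map_invol (f : vert G -> R) s :
  (forall v, f v <> 0 -> In v s) -> forall v, f (pi v) <> 0 -> In v (map pi s).
Proof.
  intros Hs v Hv. apply in_map_iff. exists (pi v). split; [apply pi_invol | exact (Hs _ Hv)].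
Qed.

Lemma rips_point_prop_comp f : rips_point_prop G d f -> rips_point_prop G d (fun v => f (pi v)).
Proof.
  intros [Hnn [s [Hnd [Hs [Hsupp Hsum]]]]]. split; [intro; apply Hnn|].
  exists (map pi s). split; [apply NoDup_map_invol, Hnd|]. split; [apply rsimplex_map, Hs|].
  split; [apply support_map_invol, Hsupp | rewrite lsum_map_invol; exact Hsum].
Qed.

Definition rips_act (x : rips_point G d) : rips_point G d :=
  exist _ (fun v => coord x (pi v)) (rips_point_prop_comp (coord x) (proj2_sig x)).

Lemma seg_len_act x z r : seg_len G d x z r -> seg_len G d (rips_act x) (rips_act z) r.
Proof.
  intros [s [Hnd [Hs [Hx [Hz ->]]]]]. exists (map pi s).
  split; [apply NoDup_map_invol, Hnd|]. split; [apply rsimplex_map, Hs|].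
  split; [apply (support_map_invol (coord x)), Hx|].
  split; [apply (support_map_invol (coord z)), Hz|].
  rewrite (lsum_map_invol (fun v => (coord x v - coord z v) ^ 2)). reflexivity.
Qed.

Lemma chain_act x y r : chain G d x y r -> chain G d (rips_act x) (rips_act y) r.
Proof. induction 1; econstructor; eauto using seg_len_act. Qed.

Lemma rips_act_invol x : rips_act (rips_act x) = x.
Proof. apply rips_point_eq. extensionality v. cbn. rewrite pi_invol. reflexivity. Qed.

Lemma rips_dist_act x y : rips_dist G d (rips_act x) (rips_act y) = rips_dist G d x y.
Proof.
  unfold rips_dist. f_equal. apply Glb_Rbar_eqset. intro r. split.
  - intro H. rewrite <- (rips_act_invol x), <- (rips_act_invol y). apply chain_act, H.
  - apply chain_act.
Qed.

Lemma rips_act_vertex_point vert_eq_dec d_nonneg a :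
  pi a = a -> rips_act (vertex_point vert_eq_dec d_nonneg a) = vertex_point vert_eq_dec d_nonneg a.
Proof.
  intro Ha. apply rips_point_eq. extensionality v. cbn. unfold vertex_coord.
  destruct (vert_eq_dec (pi v) a) as [E | E], (vert_eq_dec v a) as [E' | E']; try reflexivity.
  - exfalso. apply E'. rewrite <- (pi_invol v), E, Ha. reflexivity.
  - exfalso. apply E. rewrite E'. exact Ha.
Qed.

Lemma rips_CAT0_act_fixes_geodesic x y g :
  CAT0 (rips_dist G d) -> rips_act x = x -> rips_act y = y -> geodesic (rips_dist G d) x y g ->
  forall s, 0 <= s <= rips_dist G d x y -> forall v, coord (g s) (pi v) = coord (g s) v.
Proof.
  intros Hcat Hx Hy Hg s Hs v.
  assert (E : rips_act (g s) = g s).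
  { exact (cat0_isometry_fixes_geodesic _ _ rips_dist_refl rips_dist_nonneg x y g rips_act
             Hcat rips_dist_act Hx Hy Hg s Hs). }
  exact (f_equal (fun z : rips_point G d => coord z v) E).
Qed.

End Automorphisms.

End RipsComplex.

Section Transposition.

Variables (A : Type) (A_eq_dec : forall x y : A, {x = y} + {x <> y}) (a b : A).

Definition transpose (v : A) : A :=
  if A_eq_dec v a then b else if A_eq_dec v b then a else v.

Lemma transpose_invol v : transpose (transpose v) = v.
Proof.
  unfold transpose. repeat (destruct A_eq_dec; subst; try congruence).
Qed.

Lemma transpose_left : transpose a = b.
Proof. unfold transpose. destruct (A_eq_dec a a); congruence. Qed.

Lemma transpose_other v : v <> a -> v <> b -> transpose v = v.
Proof. unfold transpose. intros Ha Hb. destruct (A_eq_dec v a), (A_eq_dec v b); congruence. Qed.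

End Transposition.

Definition thick_ray_eq_dec (x y : nat * nat) : {x = y} + {x <> y}.
Proof. decide equality; apply Nat.eq_dec. Defined.

(* Two vertices on the same level have the same neighbours, so swapping them is an automorphism. *)
Lemma thick_ray_transpose_adj p q : fst p = fst q ->
  forall u v, thick_ray_adj u v ->
    thick_ray_adj (transpose _ thick_ray_eq_dec p q u) (transpose _ thick_ray_eq_dec p q v).
Proof.
  intros Hpq u v. unfold thick_ray_adj, transpose.
  repeat destruct thick_ray_eq_dec; subst; rewrite ?Hpq; congruence.
Qed.

Lemma thick_ray_invariant_support d (x : rips_point thick_ray d) a b :
  (forall p q, fst p = fst q -> p <> a -> p <> b -> q <> a -> q <> b ->
     forall v, coord x (transpose _ thick_ray_eq_dec p q v) = coord x v) ->
  forall v, v <> a -> v <> b -> coord x v = 0.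
Proof.
  intros Hinv [n i] Ha Hb.
  destruct (proj2_sig x) as [_ [s [_ [_ [Hsupp _]]]]].
  destruct (fresh_index (a :: b :: s) n) as [j Hj]. simpl in Hj.
  rewrite <- (Hinv (n, i) (n, j) eq_refl Ha Hb) by (intro E; apply Hj; auto).
  rewrite transpose_left.
  destruct (Req_dec (coord x (n, j)) 0) as [Z | NZ]; [exact Z|].
  exfalso. apply Hj. right. right. exact (Hsupp _ NZ).
Qed.

Lemma thick_ray_far_vertex d : exists k, ~ Defs.within thick_ray d (0, 0)%nat (k, 0)%nat.
Proof.
  destruct (archimed d) as [Hup _]. exists (Z.to_nat (up d)).
  intros [n [W Hn]]. apply thick_ray_walk_level, ray_walk_length in W. simpl in W.
  assert (Hk : (Z.to_nat (up d) <= n)%nat) by lia. apply le_INR in Hk.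
  destruct (Z_le_gt_dec 0 (up d)) as [Hpos | Hneg].
  - rewrite INR_IZR_INZ, Z2Nat.id in Hk by exact Hpos. lra.
  - apply Z.gt_lt, IZR_lt in Hneg. pose proof (pos_INR n). lra.
Qed.

Lemma thick_ray_rips_not_CAT0 d : 0 < d -> ~ rips_CAT0 thick_ray d.
Proof.
  intros Hd [_ Hcat]. assert (Hd' : 0 <= d) by lra.
  destruct (thick_ray_far_vertex d) as [k Hfar].
  set (a := (0, 0)%nat) in Hfar. set (b := (k, 0)%nat) in Hfar.
  set (vpt := vertex_point thick_ray d thick_ray_eq_dec Hd').
  assert (HD := rips_dist_refl thick_ray d). assert (HD' := rips_dist_nonneg thick_ray d).
  destruct (proj1 Hcat (vpt a) (vpt b)) as [g Hg].
  set (L := rips_dist thick_ray d (vpt a) (vpt b)) in Hg.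
  assert (HL : L <> 0).
  { intro E. apply (geodesic_space_dist_eq0 _ _ (proj1 Hcat)), vertex_point_inj in E.
    apply Hfar. rewrite <- E. exact (within_refl thick_ray d a Hd'). }
  assert (Hfix : forall p q, fst p = fst q -> p <> a -> p <> b -> q <> a -> q <> b ->
            forall v, coord (g (L / 2)) (transpose _ thick_ray_eq_dec p q v) = coord (g (L / 2)) v).
  { intros p q Hpq Hpa Hpb Hqa Hqb.
    assert (0 <= L) by apply HD'.
    apply (rips_CAT0_act_fixes_geodesic thick_ray d _ (thick_ray_transpose_adj p q Hpq)
             (transpose_invol _ thick_ray_eq_dec p q) (vpt a) (vpt b) g Hcat);
      [apply rips_act_vertex_point, transpose_other; congruence ..
      | exact Hg | unfold L in *; lra]. }
  destruct (rips_point_supported_far_pair thick_ray d thick_ray_eq_dec Hd' (g (L / 2)) a b Hfar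
              (thick_ray_invariant_support d (g (L / 2)) a b Hfix)) as [E | E].
  - exact (proj1 (geodesic_midpoint_not_endpoint _ _ HD HD' _ _ g Hg HL) E).
  - exact (proj2 (geodesic_midpoint_not_endpoint _ _ HD HD' _ _ g Hg HL) E).
Qed.

Theorem corollary4p10 :
  exists G : graph,
    connected G /\ infinite_diameter G /\ infinite_valence G /\ qi_to_tree G /\
    forall d : R, 0 < d -> ~ rips_CAT0 G d.
Proof.
  exists thick_ray.
  split; [exact thick_ray_connected|].
  split; [exact thick_ray_infinite_diameter|].
  split; [exact thick_ray_infinite_valence|].
  split; [exists ray; exact (conj ray_is_tree thick_ray_qi_ray) |].
  exact thick_ray_rips_not_CAT0.
Qed.
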